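(* Let $m$ be a positive integer, $x$ a positive integer and $r\in\{0,\dots,m-1\}$. Define $y_0=(m+1)x+r$ and $y_n=\left\lfloor \frac{(m+1)y_{n-1}}{m}\right\rfloor$ for $n\ge1$. Then for every integer $n\ge 0$, $\left\lfloor \frac{y_n}{m+1}\right\rfloor = x_n(x,r)$ and $y_n\equiv r_n(x,r)\pmod{m+1}$; that is, $x_n(x,r)$ and $r_n(x,r)$ are the quotient and remainder of $y_n$ upon division by $m+1$.
   Context: Fix a positive integer $m$. The triangle $T_m$ is an array whose row $x$ ($x=1,2,\dots$) has $x$ entries, in columns $0,\dots,x-1$. Row $1$ is the single entry $1$. For $x>1$, row $x$ is obtained from row $x-1$ by rotating it cyclically left by $m$ positions (the entry in column $c$ of row $x-1$ moves to column $(c-m)\bmod(x-1)\in\{0,\dots,x-2\}$ of row $x$), then appending in column $x-1$ a new entry equal to $1$ plus the entry in column $0$ of row $x-1$. Entries are individual objects keeping their identity as they move. Tracking: for a positive integer $x$ and $r\in\{0,\dots,m-1\}$, follow the individual entry in row $x$, column $r\bmod x$. Let $(x_0,r_0),(x_1,r_1),\dots$ be the list, in strictly increasing lexicographic order, of all integer pairs $(y,c)$ with $y\ge x$, $0\le c\le m-1$, $(y,c)\ge (x,r)$ lexicographically, such that the tracked entry occupies column $c\bmod y$ of row $y$ (so $x_0=x$, $r_0=r$). Write $x_n(x,r)=x_n$, $r_n(x,r)=r_n$. *)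

From mathcomp Require Import all_boot all_order all_algebra.
Set Implicit Arguments. Unset Strict Implicit. Unset Printing Implicit Defensive.

(* Column (in row x + k) of the entry of T_m that sits in row x, column r mod x.
   Row z has z entries; passing from row z to row z+1 the entry in column c
   moves to column (c - m) mod z (the appended entry is new, so a tracked
   entry is never removed). *)
Fixpoint track_col (m x r k : nat) : nat :=
  match k with
  | 0 => r %% x
  | k'.+1 =>
      let c := track_col m x r k' in
      let z := x + k' in
      `|((c%:Z - m%:Z) %% z%:Z)%Z|%N
  end.

Definition tracked (m x r y c : nat) : bool :=
  [&& x <= y, c < m, ((x < y) || ((x == y) && (r <= c)))
    & track_col m x r (y - x) == c %% y].

Definition lexlt (y' c' y c : nat) : bool := (y' < y) || ((y' == y) && (c' < c)).

Definition n_before (m x r y c : nat) : nat :=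
  \sum_(x <= y' < y.+1) \sum_(c' < m) (tracked m x r y' c' && lexlt y' c' y c).

(* (y, c) = (x_n(x,r), r_n(x,r)): the element of the list (listed in strictly
   increasing lexicographic order) with exactly n predecessors. *)
Definition is_nth_tracked (m x r n y c : nat) : Prop :=
  tracked m x r y c /\ n_before m x r y c = n.

Fixpoint yseq (m x r n : nat) : nat :=
  match n with
  | 0 => (m + 1) * x + r
  | n'.+1 => ((m + 1) * yseq m x r n') %/ m
  end.

From mathcomp Require Import all_boot all_order all_algebra.
From mathcomp Require Import zify.

(* The tracked pairs (y, c) are visited one at a time: within row y the entry
   sits at column c mod y, so the next admissible column in the same row is
   c + y; if c + y >= m the entry leaves the row, drifting m columns left per
   row, and reappears at column (c + y) mod m of row y + (c + y) %/ m, with no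
   admissible column in the rows in between.  Writing (m + 1) y + c for the
   pair (y, c), this successor map is exactly y_n |-> floor((m + 1) y_n / m). *)

Lemma absz_modz_small (u q : int) (t z : nat) :
  u = (t%:Z + q * z%:Z)%R -> t < z -> `|(u %% z%:Z)%Z|%N = t.
Proof. by move=> -> tz; rewrite GRing.addrC modzMDl modz_small. Qed.

Section Tracking.

Set Implicit Arguments.
Unset Strict Implicit.

Variables m x r : nat.
Hypothesis x_gt0 : 0 < x.

Lemma track_colS k :
  track_col m x r k.+1 = `|(((track_col m x r k)%:Z - m%:Z) %% (x + k)%:Z)%Z|%N.
Proof. by []. Qed.

Lemma track_col_drift y c j : x <= y -> c < m ->
    track_col m x r (y - x) = c %% y -> 0 < j -> j * m <= c + y ->
  track_col m x r (y + j - x) = c + y - j * m.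
Proof.
move=> xy cm hc; have y0 : 0 < y := leq_trans x_gt0 xy.
elim: j => [//|j IH] _ hj.
have -> : y + j.+1 - x = (y + j - x).+1 by lia.
rewrite track_colS (_ : x + (y + j - x) = y + j); last by lia.
(* Only the first step wraps around: (c mod y) - m < 0, while c + y - j m >= m afterwards. *)
case: j IH hj => [|j] IH hj.
- rewrite addn0 hc; apply: (@absz_modz_small _ (- ((c %/ y)%:Z + 1))%R); last by lia.
  by move: (divn_eq c y); move: (c %/ y) (c %% y) => q s; nia.
- rewrite IH //; last by lia.
  by apply: (@absz_modz_small _ 0%R); [rewrite GRing.mul0r GRing.addr0; lia | lia].
Qed.

Lemma tracked_le y c : tracked m x r y c -> x <= y.
Proof. by case/and4P. Qed.

Lemma tracked_ltm y c : tracked m x r y c -> c < m.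
Proof. by case/and4P. Qed.

Lemma tracked_col y c : tracked m x r y c -> track_col m x r (y - x) = c %% y.
Proof. by case/and4P => _ _ _ /eqP. Qed.

Lemma tracked_start : r < m -> tracked m x r x r.
Proof. by move=> rm; rewrite /tracked leqnn rm leqnn eqxx orbT subnn /=. Qed.

Definition row_count y := \sum_(0 <= c < m) tracked m x r y c.

Definition rank y c :=
  \sum_(x <= y' < y) row_count y' + \sum_(0 <= c' < c) tracked m x r y c'.

Lemma n_before_rank y c : x <= y -> c <= m -> n_before m x r y c = rank y c.
Proof.
move=> xy cm; rewrite /n_before /rank big_nat_recr //=; congr (_ + _).
- apply: eq_big_nat => y' /andP[_ lt_y'y].
  by rewrite /row_count big_mkord; apply: eq_bigr => c' _; rewrite /lexlt lt_y'y andbT.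
- rewrite -(big_mkord xpredT (fun i => tracked m x r y i && lexlt y i y c : nat)).
  rewrite (@big_cat_nat _ _ _ c 0 m _ _ (leq0n c) cm) /= [X in _ + X]big_nat_cond.
  rewrite [X in _ + X]big1 ?addn0 => [|i /andP[/andP[ci _] _]]; last first.
    by rewrite /lexlt ltnn eqxx ltnNge ci andbF.
  rewrite big_nat_cond [RHS]big_nat_cond; apply: eq_bigr => i /andP[/andP[_ ic] _].
  by rewrite /lexlt ltnn eqxx ic /= andbT.
Qed.

Lemma rank_start : rank x r = 0.
Proof.
rewrite /rank big_geq // add0n big_nat_cond big1 // => i /andP[/andP[_ ir] _].
by rewrite /tracked ltnn eqxx (leqNgt r i) ir !andbF.
Qed.

Lemma tracked_row_uniq y c i : tracked m x r y c -> tracked m x r y i ->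
  c <= i -> i < c + y -> i = c.
Proof.
move=> /tracked_col hc /tracked_col hi ci iy.
have : y %| i - c by rewrite -eqn_mod_dvd // -hi -hc.
have [|/eqP nz /dvdn_leq] := eqVneq (i - c) 0; first by lia.
by move/(_ (ltac:(lia))); lia.
Qed.

Lemma sum_tracked_window y c e : tracked m x r y c -> c < e -> e <= c + y ->
  \sum_(c <= i < e) tracked m x r y i = 1.
Proof.
move=> hc ce ey; rewrite big_ltn // hc big_nat_cond big1 // => i /andP[/andP[ci ie] _].
apply/eqP; rewrite eqb0; apply/negP => hi; have := tracked_row_uniq hc hi (ltnW ci); lia.
Qed.

Lemma row_count_eq0 y : m <= track_col m x r (y - x) -> row_count y = 0.
Proof.
move=> my; rewrite /row_count big_nat_cond big1 // => i /andP[/andP[_ im] _].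
apply/eqP; rewrite eqb0; apply/negP => /tracked_col hi; have := leq_mod i y; lia.
Qed.

Lemma sum_tracked_left y t : track_col m x r (y - x) = t -> t < y ->
  \sum_(0 <= i < t) tracked m x r y i = 0.
Proof.
move=> ht ty; rewrite big_nat_cond big1 // => i /andP[/andP[_ it] _].
by apply/eqP; rewrite eqb0; apply/negP => /tracked_col; rewrite ht modn_small; lia.
Qed.

Definition next_row y c := y + (c + y) %/ m.
Definition next_col y c := (c + y) %% m.

Lemma tracked_next_same_row y c : tracked m x r y c -> c + y < m ->
  tracked m x r (next_row y c) (next_col y c) /\
  rank (next_row y c) (next_col y c) = (rank y c).+1.
Proof.
move=> hc cym; have y0 : 0 < y := leq_trans x_gt0 (tracked_le hc).
rewrite /next_row /next_col divn_small // addn0 modn_small //; split.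
- move: hc => /and4P[xy _ xyr /eqP col]; apply/and4P; split => //.
  + by case/orP: xyr => [->//|/andP[-> rc]]; rewrite (leq_trans rc) ?leq_addr ?orbT.
  + by rewrite modnDr col.
- rewrite /rank -addnS; congr (_ + _).
  rewrite (@big_cat_nat _ _ _ c) ?leq_addr //= (sum_tracked_window hc) ?addn1 //.
  by rewrite -addn1 leq_add2l.
Qed.

Lemma tracked_next_later_row y c : tracked m x r y c -> m <= c + y ->
  tracked m x r (next_row y c) (next_col y c) /\
  rank (next_row y c) (next_col y c) = (rank y c).+1.
Proof.
move=> hc mcy; have cm := tracked_ltm hc; have xy := tracked_le hc.
rewrite /next_row /next_col; set k := (c + y) %/ m; set c' := (c + y) %% m.
have m0 : 0 < m by lia.
have ecy := divn_eq (c + y) m; rewrite -/k -/c' in ecy.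
have c'm : c' < m by rewrite ltn_pmod.
have k0 : 0 < k by rewrite divn_gt0.
have mk : m <= k * m by rewrite leq_pmull.
have c'y : c' < y by lia.
have col_k : track_col m x r (y + k - x) = c'.
  by rewrite (track_col_drift xy cm (tracked_col hc) k0); lia.
split.
  apply/and4P; split; [lia | done | apply/orP; left; lia |].
  by rewrite col_k modn_small ?ltn_addr.
have empty_between j : y < j < y + k -> row_count j = 0.
  move=> /andP[yj jk]; apply: row_count_eq0.
  have -> : j = y + (j - y) by lia.
  have jm : (j - y).+1 * m <= k * m by rewrite leq_mul2r; lia.
  by rewrite mulSn in jm; rewrite (track_col_drift xy cm (tracked_col hc)); lia.
rewrite /rank (sum_tracked_left col_k) ?addn0; last by lia.
rewrite (@big_cat_nat _ _ _ y) //=; last by lia.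
have -> : \sum_(y <= j < y + k) row_count j = row_count y.
  rewrite big_ltn; last by lia.
  rewrite big_nat_cond big1 ?addn0 // => j /andP[/andP[yj jk] _].
  by apply: empty_between; rewrite yj.
rewrite /row_count (@big_cat_nat _ _ _ c 0 m) ?(ltnW cm) //=.
by rewrite (sum_tracked_window hc) //; lia.
Qed.

Lemma tracked_next y c : tracked m x r y c ->
  tracked m x r (next_row y c) (next_col y c) /\
  rank (next_row y c) (next_col y c) = (rank y c).+1.
Proof.
move=> hc; have [cym|mcy] := ltnP (c + y) m.
- exact: tracked_next_same_row.
- exact: tracked_next_later_row.
Qed.

Lemma yseq_step y c : 0 < m ->
  ((m + 1) * ((m + 1) * y + c)) %/ m = (m + 1) * next_row y c + next_col y c.
Proof.
move=> m0; rewrite /next_row /next_col.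
have -> : (m + 1) * ((m + 1) * y + c) = ((m + 1) * y + c + y) * m + (c + y) by nia.
rewrite divnMDl //; move: (divn_eq (c + y) m).
by move: ((c + y) %/ m) ((c + y) %% m) => q s; nia.
Qed.

Lemma yseq_tracked n : r < m ->
  exists y c, [/\ yseq m x r n = (m + 1) * y + c, tracked m x r y c & rank y c = n].
Proof.
move=> rm; elim: n => [|n [y [c [ey hc rank_yc]]]].
  by exists x, r; rewrite tracked_start ?rank_start.
have [hc' rank'] := tracked_next hc.
exists (next_row y c), (next_col y c); split; rewrite ?rank' ?rank_yc //.
by rewrite /= ey yseq_step // (leq_ltn_trans _ (tracked_ltm hc)).
Qed.

End Tracking.

Theorem mainTheorem5 (m x r : nat) :
  0 < m -> 0 < x -> r < m ->
  forall n : nat,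
    is_nth_tracked m x r n (yseq m x r n %/ (m + 1)) (yseq m x r n %% (m + 1)).
Proof.
move=> m0 x0 rm n; have [y [c [-> hc <-]]] := yseq_tracked x0 n rm.
have cm1 : c < m + 1 by rewrite addn1 ltnS ltnW ?(tracked_ltm hc).
rewrite mulnC divnMDl ?addn_gt0 ?orbT // divn_small // addn0 modnMDl modn_small //.
split=> //; apply: n_before_rank; [exact: tracked_le hc | exact/ltnW/(tracked_ltm hc)].
Qed.
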